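(* Let $X$ be a finite simplicial complex. Then $\partial_J\circ\partial_J=0$ on $\widehat{C}(X)$; hence $(\widehat{C}(X),\partial_J)$ is a chain complex, with $\partial_J$ of bidegree $(-1,0)$.
   Context: Let $X$ be a finite simplicial complex. Its face poset $\mathcal{F}(X)$ is the directed graph whose vertices are the nonempty simplices of $X$, with a directed edge $\sigma\to\tau$ iff $\tau$ is a codimension-one face of $\sigma$. A matching on $\mathcal{F}(X)$ is a set $m$ of edges of $\mathcal{F}(X)$, no two sharing an endpoint. Given a matching $m$, let $\mathcal{F}_m(X)$ be the directed graph obtained from $\mathcal{F}(X)$ by reversing every edge in $m$; a directed cycle of $\mathcal{F}_m(X)$ (closed directed path without repeated vertices) is supported by $m$, and $J(m)$ is the number of directed cycles supported by $m$. The matching complex $\mathrm{M}(X)$ has vertex set the edges of $\mathcal{F}(X)$ and simplices the nonempty matchings; $m_\sigma$ denotes the matching of a simplex $\sigma$. Let $\widehat{C}_i^j(X)$ be the $\mathbb{F}_2$-vector space with basis the $i$-dimensional simplices $\sigma$ of $\mathrm{M}(X)$ (matchings with $i+1$ edges) with $J(m_\sigma)=j$, and $\widehat{C}(X)=\bigoplus_{i,j\ge0}\widehat{C}_i^j(X)$. The simplicial boundary $\partial$ sends $\sigma$ to the mod-2 sum of its codimension-one faces (and sends $0$-simplices to $0$). Define $\partial_J(\sigma)$ as the sum of those codimension-one faces $\tau$ of $\sigma$ with $J(m_\tau)=J(m_\sigma)$, and $\partial_d=\partial-\partial_J$ (the sum of faces $\tau$ with $J(m_\tau)<J(m_\sigma)$).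 *)

From HB Require Import structures.
From mathcomp Require Import all_boot all_order all_algebra.
Set Implicit Arguments. Unset Strict Implicit. Unset Printing Implicit Defensive.
Import GRing.Theory.
Local Open Scope ring_scope.

Section MatchingComplex.
Variable V : finType.

(* Simplices of X are nonempty finite subsets of V. *)
Definition simplex := {set V}.
(* Potential edges of the face poset: (sigma, tau) meaning sigma -> tau. *)
Definition fedge := (simplex * simplex)%type.

Definition is_complex (K : {set simplex}) : bool :=
  (set0 \notin K) &&
  [forall s in K, forall t : simplex, ((t \subset s) && (t != set0)) ==> (t \in K)].

Definition face_edge (K : {set simplex}) (e : fedge) : bool :=
  [&& e.1 \in K, e.2 \in K, e.2 \subset e.1 & #|e.1| == #|e.2|.+1].

Definition share_endpoint (e f : fedge) : bool :=
  [|| e.1 == f.1, e.1 == f.2, e.2 == f.1 | e.2 == f.2].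

Definition is_matching (K : {set simplex}) (m : {set fedge}) : bool :=
  [forall e in m, face_edge K e] &&
  [forall e in m, forall f in m, (e != f) ==> ~~ share_endpoint e f].

Definition arc (K : {set simplex}) (m : {set fedge}) (x y : simplex) : bool :=
  (face_edge K (x, y) && ((x, y) \notin m)) || (face_edge K (y, x) && ((y, x) \in m)).

Definition cyc_arcs (p : seq simplex) : {set fedge} :=
  [set e | e \in zip p (rot 1 p)].

(* A vertex list without repetitions has length at
   most #|simplex|, so the existential is over a finite type. Cycles are
   identified up to rotation via their arc sets. *)
Definition is_dcycle (K : {set simplex}) (m : {set fedge}) (C : {set fedge}) : bool :=
  [exists n : 'I_(#|{: simplex}|).+1, exists t : n.-tuple simplex,
     [&& (0 < n)%N, uniq t, cycle (arc K m) t & C == cyc_arcs t]].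

Definition J (K : {set simplex}) (m : {set fedge}) : nat :=
  #|[set C : {set fedge} | is_dcycle K m C]|.

(* Chains: F_2-linear combinations of simplices of M(X) (nonempty matchings),
   represented by their coefficient functions. *)
Definition chain := {ffun {set fedge} -> 'F_2}.

Definition msimplex (K : {set simplex}) (s : {set fedge}) : bool :=
  is_matching K s && (s != set0).

Definition in_Chat (K : {set simplex}) (c : chain) : Prop :=
  forall s, c s != 0 -> msimplex K s.

Definition in_Cij (K : {set simplex}) (i j : nat) (c : chain) : Prop :=
  forall s, c s != 0 -> [&& msimplex K s, #|s| == i.+1 & J K s == j].

Definition codim1_face (K : {set simplex}) (t s : {set fedge}) : bool :=
  [&& msimplex K s, msimplex K t, t \subset s & #|s| == #|t|.+1].

Definition dJ (K : {set simplex}) (c : chain) : chain :=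
  [ffun t => \sum_(s : {set fedge} | codim1_face K t s && (J K t == J K s)) c s].

End MatchingComplex.

From Pilot Require Import Defs.
From HB Require Import structures.
From mathcomp Require Import all_boot all_order all_algebra.
From mathcomp Require Import zify.
Import GRing.Theory.
Local Open Scope ring_scope.

(* The coefficient of a matching u in d_J (d_J c) is the sum, over matchings
   s containing u with two more edges, of c s times the number of matchings t,
   u < t < s (both inclusions of codimension one), with J u = J t = J s.  Over
   F_2 it therefore suffices to show that this number is 0 or 2.

   The key fact is that J is monotone: if u is contained in the matching t,
   every directed cycle of F_u(X) is a directed cycle of F_t(X).  Along a
   cycle of F_u(X) the dimension goes down exactly as often as it goes up,
   and two consecutive upward (reversed, matched) arcs are impossible, so
   every downward arc is immediately followed by an upward one; hence an edge
   of t used downward would share an endpoint with an edge of u.  Once one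
   intermediate t has J u = J t = J s, monotonicity forces the same for both
   intermediate matchings s \ {e}, e in s \ u, and there are exactly two. *)

Lemma cycle_ordSP {T : Type} (x0 : T) (e : rel T) (p : seq T) :
  reflect (forall i : 'I_(size p), e (nth x0 p i) (nth x0 p (ordS i)))
          (cycle e p).
Proof.
case: p => [|x q]; first by apply: (iffP idP) => // _ [].
have nth_next i : (i < size (x :: q))%N ->
    nth x0 (rcons q x) i = nth x0 (x :: q) (i.+1 %% size (x :: q)).
  rewrite /= => lt_i; rewrite nth_rcons.
  have [lt_iq | ge_iq] := ltnP i (size q); first by rewrite modn_small.
  have -> : i = size q by lia.
  by rewrite eqxx modnn.
rewrite /=; apply: (iffP (pathP x0)) => Hp i.
- rewrite -nth_next //; have := Hp i; rewrite size_rcons -rcons_cons => /(_ (ltn_ord i)).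
  by rewrite nth_rcons ltn_ord.
- rewrite size_rcons => lt_i; have := Hp (Ordinal lt_i).
  by rewrite -rcons_cons nth_rcons /= lt_i nth_next.
Qed.

Section CyclicCounting.
Variable n : nat.

Lemma card_cyclic_balance (g : 'I_n -> nat) (A B : pred 'I_n) :
  (forall i, g (ordS i) + A i = g i + B i)%N -> #|A| = #|B|.
Proof.
move=> balance.
have card_sum (P : pred 'I_n) : #|P| = (\sum_i (P i : nat))%N.
  by rewrite -sum1_card big_mkcond; apply: eq_bigr => i _; rewrite unfold_in; case: (P i).
have : (\sum_i (g (ordS i) + A i) = \sum_i (g i + B i))%N.
  by apply: eq_bigr => i _; exact: balance.
rewrite !big_split /=.
rewrite [X in (_ = X + _)%N](reindex_inj (@ordS_inj _)) /= => /addnI.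
by rewrite !card_sum.
Qed.

Lemma cyclic_successor (A B : pred 'I_n) :
  #|A| = #|B| -> (forall i, B (ordS i) -> A i) -> forall i, A i -> B (ordS i).
Proof.
move=> card_AB BA i Ai.
have sub : [set i | B i] \subset (@ordS n) @: [set i | A i].
  apply/subsetP => j; rewrite inE => Bj; apply/imsetP; exists (ord_pred j).
    by rewrite inE BA // ord_predK.
  by rewrite ord_predK.
have : [set i | B i] == (@ordS n) @: [set i | A i].
  rewrite eqEcard sub card_imset; last exact: ordS_inj.
  have card_set (P : pred 'I_n) : #|[set j | P j]| = #|P|.
    by apply: eq_card => j; rewrite inE.
  by move: (card_set A) (card_set B) => -> ->; rewrite card_AB leqnn.
by move/eqP/setP/(_ (ordS i)); rewrite inE imset_f ?inE.
Qed.

End CyclicCounting.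

Section Matchings.
Variables (V : finType) (K : {set {set V}}).
Implicit Types (m u s t : {set fedge V}) (x y z : simplex V).

Lemma face_card {x y} : face_edge K (x, y) -> #|x| = #|y|.+1.
Proof. by case/and4P => _ _ _ /eqP. Qed.

Lemma sub_matching {m m'} : is_matching K m -> m' \subset m -> is_matching K m'.
Proof.
move=> /andP[/forall_inP faces /forall_inP disj] sub.
apply/andP; split; apply/forall_inP => e /(subsetP sub) em; first exact: faces.
by apply/forall_inP => f /(subsetP sub) fm; exact: (forall_inP (disj e em)).
Qed.

Lemma matching_share_eq {m e f} :
  is_matching K m -> e \in m -> f \in m -> share_endpoint e f -> e = f.
Proof.
move=> /andP[_ /forall_inP disj] em fm; apply: contraTeq => ne.
exact: (implyP (forall_inP (disj e em) f fm) ne).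
Qed.

Definition down_arc m x y : bool := face_edge K (x, y) && ((x, y) \notin m).
Definition up_arc m x y : bool := face_edge K (y, x) && ((y, x) \in m).

Lemma arc_card {m x y} :
  Defs.arc K m x y -> (#|y| + down_arc m x y = #|x| + up_arc m x y)%N.
Proof.
rewrite /Defs.arc /down_arc /up_arc.
case: (boolP (face_edge K (x, y))) => [/face_card xy|_];
case: (boolP (face_edge K (y, x))) => [/face_card yx|_] /=; try lia.
- by rewrite orbF => ->; lia.
- by move=> ->; lia.
Qed.

(* Two upward arcs cannot follow each other: their matched edges would share
   the middle vertex. *)
Lemma no_up_up {m x y z} :
  is_matching K m -> up_arc m x y -> up_arc m y z -> False.
Proof.
move=> Hm /andP[fyx myx] /andP[fzy mzy].
have := matching_share_eq Hm mzy myx.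
rewrite /share_endpoint /= eqxx !orbT => /(_ isT) [zy _].
by move: (face_card fzy); rewrite zy; lia.
Qed.

Lemma down_then_up {m} {p : seq (simplex V)} (x0 : simplex V) :
  is_matching K m -> cycle (Defs.arc K m) p ->
  forall i : 'I_(size p),
    down_arc m (nth x0 p i) (nth x0 p (ordS i)) ->
    up_arc m (nth x0 p (ordS i)) (nth x0 p (ordS (ordS i))).
Proof.
move=> Hm /(cycle_ordSP x0) cyc.
pose f (i : 'I_(size p)) := nth x0 p i.
apply: (@cyclic_successor _ (fun i => down_arc m (f i) (f (ordS i)))
                            (fun i => up_arc m (f i) (f (ordS i)))).
- by apply: (@card_cyclic_balance _ (fun i => #|f i|)) => i; exact: arc_card (cyc i).
- move=> i up_next; have /orP[//|up_i] := cyc i.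
  by case: (no_up_up Hm up_i up_next).
Qed.

(* Enlarging the matching keeps every directed cycle: a downward arc of a
   cycle of F_u(X) is followed by an upward arc along an edge of u, so its
   own edge cannot lie in the larger matching t. *)
Lemma cycle_arc_mono {u t} {p : seq (simplex V)} :
  is_matching K u -> is_matching K t -> u \subset t ->
  cycle (Defs.arc K u) p -> cycle (Defs.arc K t) p.
Proof.
move=> Hu Ht sub cyc; case: p cyc => [//|x0 q] cyc.
apply/(cycle_ordSP x0) => i; have /orP[down_i|/andP[fe mu]] := cycle_ordSP x0 _ _ cyc i.
- have /andP[fe nmu] := down_i; rewrite /Defs.arc fe /=; apply/orP; left.
  apply: contra nmu => mt.
  have /andP[_ next_u] := down_then_up x0 Hu cyc i down_i.
  suff -> : (nth x0 (x0 :: q) i, nth x0 (x0 :: q) (ordS i)) =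
            (nth x0 (x0 :: q) (ordS (ordS i)), nth x0 (x0 :: q) (ordS i)) by [].
  by apply: matching_share_eq Ht mt (subsetP sub _ next_u) _; apply/or4P/Or44.
- by rewrite /Defs.arc fe (subsetP sub _ mu) orbT.
Qed.

Lemma J_mono {u t} :
  is_matching K u -> is_matching K t -> u \subset t -> (J K u <= J K t)%N.
Proof.
move=> Hu Ht sub; apply: subset_leq_card; apply/subsetP => C; rewrite !inE.
case/existsP => k /existsP [p /and4P[k_gt0 p_uniq cyc eqC]].
apply/existsP; exists k; apply/existsP; exists p.
by rewrite k_gt0 p_uniq eqC (cycle_arc_mono Hu Ht sub cyc).
Qed.

Lemma codim1_faceE t s :
  codim1_face K t s -> exists2 e, e \in s :\: t & t = s :\ e.
Proof.
case/and4P => _ _ ts /eqP cs.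
have /cards1P [e se] : #|s :\: t| == 1%N.
  by rewrite cardsD (setIidPr ts) cs subSnn.
have : e \in s :\: t by rewrite se set11.
rewrite inE => /andP[et es]; exists e; first by rewrite inE et es.
apply/setP => x; rewrite !inE; case: (boolP (x \in t)) => xt.
- by rewrite (subsetP ts x xt) andbT; apply/esym; apply: contraNneq et => <-.
- apply/esym/negbTE/andP => -[/negbTE xe xs].
  have : x \in s :\: t by rewrite inE xt xs.
  by rewrite se inE xe.
Qed.

Definition J_face t s : bool := codim1_face K t s && (J K t == J K s).

(* If u < t0 < s is a chain of J-faces, removing from s any edge not in u
   gives another such chain: by monotonicity J is squeezed between
   J u = J s. *)
Lemma J_face_remove u t0 s e :
  J_face u t0 -> J_face t0 s -> e \in s :\: u ->
  J_face u (s :\ e) && J_face (s :\ e) s.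
Proof.
move=> /andP[ut0 /eqP Jut0] /andP[t0s /eqP Jt0s].
rewrite inE => /andP[eu es].
have /and4P[_ mu sub_ut0 /eqP ct0] := ut0.
have /and4P[ms _ sub_t0s /eqP cs] := t0s.
have [/andP[Hs _] /andP[Hu /set0Pn [x xu]]] := (ms, mu).
have sub_use : u \subset s :\ e.
  apply/subsetP => y yu; rewrite !inE (subsetP (subset_trans sub_ut0 sub_t0s) y yu).
  by rewrite andbT; apply: contraNneq eu => <-.
have Hse := sub_matching Hs (subD1set s e).
have mse : msimplex K (s :\ e).
  by rewrite /msimplex Hse; apply/set0Pn; exists x; exact: (subsetP sub_use).
have cse : #|s| = (#|s :\ e|).+1 by rewrite (cardsD1 e s) es.
have card_se : #|s :\ e| = #|u|.+1 by apply: succn_inj; rewrite -cse cs ct0.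
have J_se : J K (s :\ e) = J K s.
  apply/eqP; rewrite eqn_leq (J_mono Hse Hs (subD1set s e)) -Jt0s -Jut0.
  exact: J_mono Hu Hse sub_use.
rewrite /J_face /codim1_face ms mu mse sub_use subD1set -cse card_se.
by rewrite J_se Jut0 Jt0s !eqxx.
Qed.

Lemma J_faces_between u s :
  let T := [set t | J_face u t && J_face t s] in T = set0 \/ #|T| = 2.
Proof.
move=> T; case: (set_0Vmem T) => [-> | [t0 t0T]]; [by left | right].
move: t0T; rewrite inE => /andP[ut0 t0s].
have /andP[/and4P[_ _ sub_ut0 /eqP ct0] _] := ut0.
have /andP[/and4P[_ _ sub_t0s /eqP cs] _] := t0s.
have sub_us := subset_trans sub_ut0 sub_t0s.
have -> : T = (fun e => s :\ e) @: (s :\: u).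
  apply/setP => t; rewrite inE; apply/idP/imsetP.
  - case/andP => /andP[/and4P[_ _ sub_ut _] _] /andP[/codim1_faceE[e] + -> _].
    rewrite !inE => /andP[et es]; exists e => //.
    by rewrite inE es andbT; apply: contraNN et; exact: (subsetP sub_ut e).
  - by case=> e eus ->; exact: J_face_remove ut0 t0s eus.
rewrite card_in_imset; last first.
  move=> e1 e2; rewrite !inE => /andP[_ e1s] /andP[_ e2s] eq12.
  have : e1 \notin s :\ e2 by rewrite -eq12 !inE eqxx.
  by rewrite !inE e1s andbT negbK => /eqP.
by rewrite cardsD (setIidPr sub_us) cs ct0 -addn2 addKn.
Qed.

End Matchings.
Arguments J_face {V} K t s.
Arguments J_faces_between {V} K u s.

Lemma F2_double (x : 'F_2) : x *+ 2 = 0.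
Proof.
have two_eq0 : 2%:R = 0 :> 'F_2 by apply/eqP.
by rewrite -mulr_natr two_eq0 mulr0.
Qed.

Lemma dJ_dJ (V : finType) (K : {set {set V}}) (c : chain V) : dJ K (dJ K c) = 0.
Proof.
apply/ffunP => u; rewrite !ffunE; under eq_bigr do rewrite ffunE.
rewrite (exchange_big_dep xpredT) //=; apply: big1 => s _.
rewrite (eq_bigl (mem [set t | J_face K u t && J_face K t s])); last first.
  by move=> t; rewrite !inE.
rewrite sumr_const; case: (J_faces_between K u s) => ->; first by rewrite cards0.
exact: F2_double.
Qed.

Lemma dJ_bidegree (V : finType) (K : {set {set V}}) (i j : nat) (c : chain V) :
  in_Cij K i.+1 j c -> in_Cij K i j (dJ K c).
Proof.
move=> Hc t; rewrite ffunE => nz.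
have /existsP [s /andP[/andP[ts /eqP Jts] cs]] :
    [exists s, J_face K t s && (c s != 0)].
  apply: contraNT nz => /existsPn none; rewrite big1 // => s ts.
  by apply/eqP; move: (none s); rewrite /J_face ts negbK.
have /and3P[_ /eqP css /eqP Js] := Hc s cs.
have /and4P[_ mt _ /eqP cst] := ts.
by rewrite mt Jts Js eqxx andbT; apply/eqP/succn_inj; rewrite -cst css.
Qed.

Lemma dJ_vertices (V : finType) (K : {set {set V}}) (j : nat) (c : chain V) :
  in_Cij K 0 j c -> dJ K c = 0.
Proof.
move=> Hc; apply/ffunP => t; rewrite !ffunE.
apply: big1 => s /andP[/and4P[_ /andP[_ t_ne0] _ /eqP cs] _].
apply: contraNeq t_ne0 => /Hc /and3P[_ /eqP cs1 _].
by rewrite -cards_eq0 -eqSS -cs cs1.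
Qed.

Theorem mainTheorem5 (V : finType) (K : {set {set V}}) :
  is_complex K ->
  (forall c : chain V, in_Chat K c -> dJ K (dJ K c) = 0) /\
  (forall (i j : nat) (c : chain V), in_Cij K i.+1 j c -> in_Cij K i j (dJ K c)) /\
  (forall (j : nat) (c : chain V), in_Cij K 0 j c -> dJ K c = 0).
Proof.
move=> _; split; [|split].
- by move=> c _; exact: dJ_dJ.
- exact: dJ_bidegree.
- exact: dJ_vertices.
Qed.
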